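(* Let $(A,G)$ be an admissible pair with $A\in M_{Q_0}(\mathbb Z)$, and assume that $G$ has at most one non-trivial orbit in $Q_0$. Then $(A,G)$ is a stable admissible pair.
   Context: $Q_0$ finite; $A=(a_{ij})$ skew-symmetrizable ($DA$ skew-symmetric for a positive integer diagonal $D$). Mutation $\mu_k(B)=(b'_{ij})$: $b'_{ij}=-b_{ij}$ if $k\in\{i,j\}$, else $b_{ij}+\tfrac12(|b_{ik}|b_{kj}+b_{ik}|b_{kj}|)$. A permutation $g$ of $Q_0$ is an automorphism of $B$ if $b_{gi,gj}=b_{ij}$; a group $G$ of automorphisms of $B$ is admissible ($(B,G)$ an admissible pair) if for distinct $i,j$ in the same $G$-orbit there is no path of length $1$ or $2$ from $i$ to $j$ in the quiver of $B$ ($b_{ij}\le0$ and no $k$ with $b_{ik}>0$, $b_{kj}>0$). For a $G$-orbit $\mathbf i$, $\mu^G_{\mathbf i}=\prod_{j\in\mathbf i}\mu_j$. $(A,G)$ is stable if for every finite sequence of $G$-orbits $\mathbf i_1,\ldots,\mathbf i_n$, each pair $(\mu^G_{\mathbf i_m}\circ\cdots\circ\mu^G_{\mathbf i_1}(A),G)$, $1\le m\le n$, is admissible. *)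

From HB Require Import structures.
From mathcomp Require Import all_boot all_order all_fingroup all_algebra.
Set Implicit Arguments. Unset Strict Implicit. Unset Printing Implicit Defensive.
Import Order.TTheory GRing.Theory Num.Theory.
Local Open Scope ring_scope.

Definition qmat (Q : finType) := Q -> Q -> int.

Definition skew_symmetrizable (Q : finType) (A : qmat Q) : Prop :=
  exists d : Q -> nat, (forall i, (0 < d i)%N) /\
    forall i j, (d i)%:Z * A i j = - ((d j)%:Z * A j i).

(* Matrix mutation mu_k. The quantity |b_ik| b_kj + b_ik |b_kj| is always
   even, so the exact division by 2 is an integer division. *)
Definition mutate (Q : finType) (k : Q) (B : qmat Q) : qmat Q :=
  fun i j => if (i == k) || (j == k) then - B i j
             else B i j + ((`|B i k| * B k j + B i k * `|B k j|) %/ 2)%Z.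

Definition gorbit (Q : finType) (G : {group {perm Q}}) (i : Q) : {set Q} :=
  [set (g : {perm Q}) i | g in G].

Definition is_aut (Q : finType) (B : qmat Q) (g : {perm Q}) : Prop :=
  forall i j, B (g i) (g j) = B i j.

Definition admissible (Q : finType) (B : qmat Q) (G : {group {perm Q}}) : Prop :=
  (forall g, g \in G -> is_aut B g) /\
  (forall i j, j \in gorbit G i -> i != j ->
     B i j <= 0 /\ ~ (exists k, 0 < B i k /\ 0 < B k j)).

Definition orbit_mutate (Q : finType) (o : {set Q}) (B : qmat Q) : qmat Q :=
  foldr (fun j B' => mutate j B') B (enum o).

Definition orbit_mutate_seq (Q : finType) (s : seq {set Q}) (B : qmat Q) : qmat Q :=
  foldl (fun B' o => orbit_mutate o B') B s.

Definition is_gorbit (Q : finType) (G : {group {perm Q}}) (o : {set Q}) : Prop :=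
  exists i, o = gorbit G i.

Definition stable (Q : finType) (A : qmat Q) (G : {group {perm Q}}) : Prop :=
  forall s : seq {set Q}, (forall o, o \in s -> is_gorbit G o) ->
    forall m : nat, (1 <= m <= size s)%N ->
      admissible (orbit_mutate_seq (take m s) A) G.

Definition at_most_one_nontrivial_orbit (Q : finType) (G : {group {perm Q}}) : Prop :=
  forall i j, (1 < #|gorbit G i|)%N -> (1 < #|gorbit G j|)%N -> gorbit G i = gorbit G j.

From mathcomp Require Import all_boot all_order all_fingroup all_algebra.
From mathcomp Require Import ring zify.
Set Implicit Arguments. Unset Strict Implicit. Unset Printing Implicit Defensive.
Import Order.TTheory GRing.Theory Num.Theory.
Local Open Scope ring_scope.

(* The invariant carried along any sequence of orbit mutations is: B is
   skew-symmetrized by the original D, G acts by automorphisms of B, and B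
   vanishes on every block orbit x orbit. Given this invariant an orbit
   mutation is the usual mutation formula summed over the orbit, so the
   invariant is preserved, and it implies admissibility. The only
   non-formal point is the vanishing on a non-trivial orbit {i, g i, ...}
   after mutating at another orbit: the mutated orbit is then a single
   G-fixed vertex k, and the correction term for (i, g i) through k is built from
   b_ik and b_{k, g i} = b_{g k, g i} = b_ki, which have opposite signs.
   The same remark forbids a path i -> k -> g i of length 2. Initially the
   vanishing follows from b_ij <= 0, b_ji <= 0 and skew-symmetrizability. *)

Definition mutation_term (x y : int) : int := ((`|x| * y + x * `|y|) %/ 2)%Z.

Lemma mutateE (Q : finType) (k : Q) (B : qmat Q) i j : mutate k B i j =
  if (i == k) || (j == k) then - B i j else B i j + mutation_term (B i k) (B k j).
Proof. by []. Qed.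

Lemma mutation_termK x y : mutation_term x y * 2 = `|x| * y + x * `|y|.
Proof.
have [c E] : exists c, `|x| * y + x * `|y| = c * 2.
  case: (lerP 0 x) => hx; case: (lerP 0 y) => hy;
    [exists (x * y) | exists 0 | exists 0 | exists (- (x * y))]; nia.
by rewrite /mutation_term E mulzK.
Qed.

Lemma mutation_term_eq0 x y : x * y <= 0 -> mutation_term x y = 0.
Proof.
move=> xy_le0; have E : `|x| * y + x * `|y| = 0 by nia.
by rewrite /mutation_term E div0z.
Qed.

Lemma mutation_term0l y : mutation_term 0 y = 0.
Proof. by apply: mutation_term_eq0; rewrite mul0r. Qed.

Lemma mutation_term0r x : mutation_term x 0 = 0.
Proof. by apply: mutation_term_eq0; rewrite mulr0. Qed.

Section SkewSymmetrizer.

Variables (Q : finType) (d : Q -> nat).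
Hypothesis d_gt0 : forall i, (0 < d i)%N.

Definition skew_symmetrized_by (B : qmat Q) : Prop :=
  forall i j, (d i)%:Z * B i j = - ((d j)%:Z * B j i).

Lemma skew_mul_le0 B i j : skew_symmetrized_by B -> B i j * B j i <= 0.
Proof.
move=> skB; have := skB i j; have := d_gt0 i; have := d_gt0 j.
have : (d i)%:Z * (d j)%:Z * (B i j * B j i) = - ((d j)%:Z * B j i) ^+ 2.
  by rewrite expr2 -mulNr -skB; ring.
nia.
Qed.

Lemma skew_diag_eq0 B i : skew_symmetrized_by B -> B i i = 0.
Proof. by move=> skB; have := skB i i; have := d_gt0 i; nia. Qed.

Lemma skew_normr B i j :
  skew_symmetrized_by B -> (d i)%:Z * `|B i j| = (d j)%:Z * `|B j i|.
Proof. by move=> skB; have := congr1 Num.norm (skB i j); rewrite normrN !normrM. Qed.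

Lemma mutate_skew B k : skew_symmetrized_by B -> skew_symmetrized_by (mutate k B).
Proof.
move=> skB i j; rewrite !mutateE orbC.
case: ifP => _; first by rewrite !mulrN skB.
rewrite !mulrDr opprD skB; congr (_ + _).
apply: (@mulIf _ 2) => //; rewrite mulNr -!mulrA !mutation_termK.
(* Once multiplied by d_k > 0, both sides are rewritten to the same terms
   with the skew-symmetry relations at (i, k) and (k, j). *)
have := skB i k; have := skB k j.
have := skew_normr i k skB; have := skew_normr k j skB.
move: (B i k) (B k i) (B k j) (B j k) (d_gt0 k) => a a' b b' dk_gt0 ea eb Ea Eb.
apply: (@mulIf _ (d k)%:Z); first by rewrite eqz_nat -lt0n.
have := congr1 (fun t => t * `|b|) Ea; have := congr1 (fun t => t * `|a'|) Eb.
have := congr1 (fun t => t * b) ea; have := congr1 (fun t => t * a') eb.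
rewrite /=; nia.
Qed.

Lemma orbit_mutate_skew B o :
  skew_symmetrized_by B -> skew_symmetrized_by (orbit_mutate o B).
Proof.
by move=> skB; rewrite /orbit_mutate; elim: (enum o) => //= k s IHs; apply: mutate_skew.
Qed.

End SkewSymmetrizer.

Section MutationAtDisconnectedVertices.

Variables (Q : finType) (B : qmat Q).

Lemma foldr_mutateE (s : seq Q) :
  uniq s -> (forall k l, k \in s -> l \in s -> B k l = 0) ->
  forall i j, foldr (@mutate Q) B s i j =
    if (i \in s) || (j \in s) then - B i j
    else B i j + \sum_(k <- s) mutation_term (B i k) (B k j).
Proof.
elim: s => [|k s IHs] /=; first by move=> _ _ i j; rewrite big_nil addr0.
case/andP=> k_notin_s uniq_s B0.
have B0s l l' : l \in s -> l' \in s -> B l l' = 0.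
  by move=> ls l's; apply: B0; rewrite inE ?ls ?l's orbT.
have Bk0 l : l \in s -> B k l = 0 /\ B l k = 0.
  by move=> ls; split; apply: B0; rewrite inE ?ls ?eqxx ?orbT.
move: (IHs uniq_s B0s); set Bs := foldr _ B s => BsE.
have Bs_row a : Bs k a = B k a.
  rewrite BsE (negbTE k_notin_s) /=.
  case: ifP => [a_s | _]; first by rewrite (Bk0 a a_s).1 oppr0.
  by rewrite big1_seq ?addr0 // => l /andP[_ /Bk0[-> _]]; rewrite mutation_term0l.
have Bs_col a : Bs a k = B a k.
  rewrite BsE (negbTE k_notin_s) orbF.
  case: ifP => [a_s | _]; first by rewrite (Bk0 a a_s).2 oppr0.
  by rewrite big1_seq ?addr0 // => l /andP[_ /Bk0[_ ->]]; rewrite mutation_term0r.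
move=> i j; rewrite mutateE Bs_row Bs_col !inE big_cons.
case: (eqVneq i k) => [->|_]; first by rewrite Bs_row.
case: (eqVneq j k) => [->|_]; first by rewrite /= orbT Bs_col.
rewrite /= BsE; case: ifP => [/orP[/Bk0[_ ->] | /Bk0[-> _]] | _].
- by rewrite mutation_term0l addr0.
- by rewrite mutation_term0r addr0.
- by rewrite addrAC addrA.
Qed.

Lemma orbit_mutateE (o : {set Q}) :
  (forall k l, k \in o -> l \in o -> B k l = 0) ->
  forall i j, orbit_mutate o B i j =
    if (i \in o) || (j \in o) then - B i j
    else B i j + \sum_(k in o) mutation_term (B i k) (B k j).
Proof.
move=> B0 i j; rewrite /orbit_mutate foldr_mutateE ?enum_uniq ?mem_enum ?big_enum //.
by move=> k l; rewrite !mem_enum; apply: B0.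
Qed.

End MutationAtDisconnectedVertices.

Section Orbits.

Variables (Q : finType) (G : {group {perm Q}}).

Lemma gorbit_refl i : i \in gorbit G i.
Proof. exact: (orbit_refl 'P). Qed.

Lemma gorbit_sym i j : (i \in gorbit G j) = (j \in gorbit G i).
Proof. exact: (orbit_sym 'P). Qed.

Lemma gorbit_transl i j k :
  j \in gorbit G i -> (j \in gorbit G k) = (i \in gorbit G k).
Proof. exact: (@orbit_transl _ _ 'P). Qed.

Lemma gorbit_actr g i j : g \in G -> (g j \in gorbit G i) = (j \in gorbit G i).
Proof. exact: (orbit_actr 'P). Qed.

Lemma gorbit_card_gt1 i j : j \in gorbit G i -> i != j -> (1 < #|gorbit G i|)%N.
Proof. by move=> ji ij; apply/card_gt1P; exists i, j; rewrite gorbit_refl. Qed.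

Lemma gorbit_fixed_off_nontrivial i k g :
  at_most_one_nontrivial_orbit G -> (1 < #|gorbit G i|)%N -> k \notin gorbit G i ->
  g \in G -> g k = k.
Proof.
move=> one_orbit i_gt1 k_notin_i gG.
have k_triv : #|orbit 'P G k| = 1%N.
  apply/eqP; rewrite eqn_leq card_gt0; apply/andP; split.
    rewrite leqNgt; apply: contra k_notin_i => /one_orbit/(_ i_gt1) <-.
    exact: gorbit_refl.
  by apply/set0Pn; exists k; apply: gorbit_refl.
by have /orbit1P/afixP := card_orbit1 k_triv; apply.
Qed.

End Orbits.

Section MutationInvariant.

Variables (Q : finType) (G : {group {perm Q}}).

Definition vanishes_on_orbits (B : qmat Q) : Prop :=
  forall i j, j \in gorbit G i -> B i j = 0.

Definition acts_by_auts (B : qmat Q) : Prop := forall g, g \in G -> is_aut B g.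

Lemma vanishes_on_orbit_block B x :
  vanishes_on_orbits B ->
  forall k l, k \in gorbit G x -> l \in gorbit G x -> B k l = 0.
Proof.
move=> B0 k l kx lx; apply: B0.
by rewrite gorbit_sym (gorbit_transl _ kx) gorbit_sym.
Qed.

Lemma acts_by_auts_orbit_mutate B x :
  acts_by_auts B -> vanishes_on_orbits B -> acts_by_auts (orbit_mutate (gorbit G x) B).
Proof.
move=> autB B0 g gG i j; have B0x := vanishes_on_orbit_block (x := x) B0.
rewrite !(orbit_mutateE B0x) !gorbit_actr // autB //; case: ifP => // _.
congr (_ + _); rewrite (reindex_inj (@perm_inj _ g)) /=.
by apply: eq_big => [k | k _]; rewrite ?gorbit_actr ?autB.
Qed.

Variable d : Q -> nat.
Hypothesis d_gt0 : forall i, (0 < d i)%N.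
Hypothesis one_orbit : at_most_one_nontrivial_orbit G.

Lemma skew_aut_fixed_le0 B g i k :
  skew_symmetrized_by d B -> is_aut B g -> g k = k -> B i k * B k (g i) <= 0.
Proof.
move=> skB autB gk; have -> : B k (g i) = B k i by rewrite -{1}gk autB.
exact: skew_mul_le0.
Qed.

Lemma vanishes_on_orbits_mutate B x :
  skew_symmetrized_by d B -> acts_by_auts B -> vanishes_on_orbits B ->
  vanishes_on_orbits (orbit_mutate (gorbit G x) B).
Proof.
move=> skB autB B0 i j ji; rewrite (orbit_mutateE (vanishes_on_orbit_block B0)).
case: ifP => [_ | /norP[i_notin_x _]]; first by rewrite B0 ?oppr0.
rewrite B0 // add0r; apply: big1 => k kx; apply: mutation_term_eq0.
have [<- | ij] := eqVneq i j; first exact: skew_mul_le0.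
have k_notin_i : k \notin gorbit G i by rewrite (gorbit_transl _ kx) gorbit_sym.
have i_gt1 := gorbit_card_gt1 ji ij.
case/imsetP: ji => g gG ->; apply: skew_aut_fixed_le0 => //; first exact: autB.
exact: gorbit_fixed_off_nontrivial one_orbit i_gt1 k_notin_i gG.
Qed.

Definition mutation_invariant (B : qmat Q) : Prop :=
  [/\ skew_symmetrized_by d B, acts_by_auts B & vanishes_on_orbits B].

Lemma mutation_invariant_orbit_mutate B x :
  mutation_invariant B -> mutation_invariant (orbit_mutate (gorbit G x) B).
Proof.
case=> skB autB B0; split.
- exact: orbit_mutate_skew.
- exact: acts_by_auts_orbit_mutate.
- exact: vanishes_on_orbits_mutate.
Qed.

Lemma mutation_invariant_orbit_mutate_seq s B :
  (forall o, o \in s -> is_gorbit G o) ->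
  mutation_invariant B -> mutation_invariant (orbit_mutate_seq s B).
Proof.
elim: s B => //= o s IHs B s_orbits invB; apply: IHs.
  by move=> o' o's; apply: s_orbits; rewrite inE o's orbT.
have [x ->] : is_gorbit G o by apply: s_orbits; rewrite inE eqxx.
exact: mutation_invariant_orbit_mutate.
Qed.

Lemma mutation_invariant_admissible B : mutation_invariant B -> admissible B G.
Proof.
case=> skB autB B0; split=> // i j ji ij; split; first by rewrite B0.
case=> k [Bik_gt0 Bkj_gt0].
have k_notin_i : k \notin gorbit G i by apply: contraTN Bik_gt0 => /B0 ->.
have i_gt1 := gorbit_card_gt1 ji ij.
case/imsetP: ji Bkj_gt0 => g gG -> Bkj_gt0.
have := gorbit_fixed_off_nontrivial one_orbit i_gt1 k_notin_i gG.
by move/(skew_aut_fixed_le0 i skB (autB g gG)); rewrite leNgt mulr_gt0.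
Qed.

Lemma admissible_vanishes_on_orbits B :
  skew_symmetrized_by d B -> admissible B G -> vanishes_on_orbits B.
Proof.
move=> skB [_ no_arrow] i j ji.
have [<- | ij] := eqVneq i j; first exact: skew_diag_eq0.
have [Bij_le0 _] := no_arrow i j ji ij.
have ij' : j != i by rewrite eq_sym.
have ji' : i \in gorbit G j by rewrite gorbit_sym.
have [Bji_le0 _] := no_arrow j i ji' ij'.
by have := skB i j; have := d_gt0 i; have := d_gt0 j; nia.
Qed.

End MutationInvariant.

Theorem mainTheorem12 (Q : finType) (A : qmat Q) (G : {group {perm Q}}) :
  skew_symmetrizable A -> admissible A G -> at_most_one_nontrivial_orbit G ->
  stable A G.
Proof.
move=> [d [d_gt0 skA]] admA one_orbit s s_orbits m _.
apply: (mutation_invariant_admissible d_gt0 one_orbit).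
apply: (mutation_invariant_orbit_mutate_seq d_gt0 one_orbit).
  by move=> o /mem_take; apply: s_orbits.
split=> //; first by case: admA.
exact: admissible_vanishes_on_orbits.
Qed.
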